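(* Consider a group of $p'$ PEs where PE $i$ holds a sorted string array $S_i'$ and let $V_i$ be the sample strings drawn by PE $i$ under character-based regular sampling with sampling distance $\omega'$. For $i\in\{0,\dots,p'-1\}$ let $S_i''=\{s\in S_i': a\le s\le b\}$ be an arbitrary contiguous subsequence of $S_i'$. If $|S_i''\cap V_i|=k$ for a nonnegative integer $k$, then $\|S_i''\|\le(k+1)(\omega'+\hat{\ell})$.
   Context: $\hat{\ell}$ is the length of the longest string and $\|X\|$ the number of characters of a set of strings $X$. Character-based regular sampling: with $\omega'=\|S'\|/(p'(v+1))$ for the concatenation $S'$ of the group's arrays and a sampling factor $v$, PE $i$ draws $\lceil\|S_i'\|/\omega'\rceil-1$ equally spaced positions in its character array (the concatenation of the characters of its strings in sorted order), so that fewer than $\omega'$ characters lie between consecutive sampled positions; each sampled position is shifted by at most $\hat{\ell}-1$ towards the beginning of the string containing it, and the strings thus reached form $V_i$. *)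

From mathcomp Require Import all_boot all_order all_algebra.
Set Implicit Arguments. Unset Strict Implicit. Unset Printing Implicit Defensive.
Import Order.TTheory GRing.Theory Num.Theory.

Definition str := seq nat.

Fixpoint lexle (s t : str) : bool :=
  match s, t with
  | [::], _ => true
  | _ :: _, [::] => false
  | a :: s', b :: t' => (a < b)%N || ((a == b) && lexle s' t')
  end.

Definition nchars (X : seq str) : nat := sumn (map size X).

(* Index (in S) of the string whose character range (in the concatenation of
   the strings of S) contains character position pos : the least t with
   pos < ||take t.+1 S||.  Reaching the beginning of that string is the
   "shift towards the beginning of the string containing it". *)
Definition string_at (S : seq str) (pos : nat) : nat :=
  find (fun t => (pos < nchars (take t.+1 S))%N) (iota 0 (size S)).

Local Open Scope ring_scope.

Definition omega' (p' : nat) (S : 'I_p' -> seq str) (v : nat) : rat :=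
  (\sum_(j < p') nchars (S j))%N%:R / (p' * v.+1)%N%:R.

Definition nsamples (N : nat) (w : rat) : nat :=
  (`|Num.ceil (N%:R / w)|%N).-1.

(* the j-th (1 <= j <= m) equally spaced sampled character position *)
Definition sample_pos (N m j : nat) : nat :=
  Num.truncn ((j * N)%N%:R / (m.+1)%:R : rat).

(* V_i, given as the list of indices (into S_i') of the sampled strings. *)
Definition sample_idx (Si : seq str) (w : rat) : seq nat :=
  let N := nchars Si in
  let m := nsamples N w in
  [seq string_at Si (sample_pos N m j) | j <- iota 1 m].

From mathcomp Require Import all_boot all_order all_algebra.
From mathcomp Require Import lra zify.
Set Implicit Arguments. Unset Strict Implicit. Unset Printing Implicit Defensive.
Import Order.TTheory GRing.Theory Num.Theory.
Local Open Scope ring_scope.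

(* The m sampled positions truncate the multiples of q = N / (m + 1), and
   drawing ceil (N / omega') - 1 of them makes q <= omega', so every window
   of character positions containing no sampled position spans at most
   omega' characters.  A sampled position inside the string with index t
   puts t into V_i.  Hence in S_i'' the characters before the first sampled
   string, between two consecutive sampled strings and after the last one
   lie in sample-free windows, at most omega' each, while each of the k
   sampled strings adds at most lhat characters:
   ||S_i''|| <= (k + 1) omega' + k lhat. *)

Lemma count_iota_first (P : pred nat) (lo hi k : nat) :
  count P (iota lo (hi - lo)) = k.+1 ->
  exists t, [/\ (lo <= t < hi)%N, P t,
    forall x, (lo <= x < t)%N -> ~~ P x
    & count P (iota t.+1 (hi - t.+1)) = k].
Proof.
move=> Hk; set s := iota lo (hi - lo).
have hasPs : has P s by rewrite has_count Hk.
set i := find P s.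
have lt_i : (i < hi - lo)%N by rewrite -(size_iota lo (hi - lo)) -has_find.
have P_before x : (lo <= x < lo + i)%N -> ~~ P x.
  move=> hx; have := @before_find _ 0%N P s (x - lo) ltac:(lia).
  by rewrite nth_iota ?subnKC //; [move=> -> | lia | lia].
have P_i : P (lo + i) by have := nth_find 0%N hasPs; rewrite nth_iota.
exists (lo + i)%N; split => //; first lia.
move: Hk; have -> : (hi - lo = i + (hi - (lo + i).+1).+1)%N by lia.
rewrite iotaD count_cat /= P_i.
have -> : count P (iota lo i) = 0%N.
  rewrite (@eq_in_count _ _ pred0) ?count_pred0 // => x.
  by rewrite mem_iota => /P_before /negbTE.
by case.
Qed.

Section CharsBefore.

Variable Si : seq str.

Definition chars_before (t : nat) : nat := nchars (take t Si).

Lemma chars_before_slice (lo hi : nat) : (lo <= hi)%N ->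
  chars_before hi = (chars_before lo + nchars (drop lo (take hi Si)))%N.
Proof.
move=> le_lh; rewrite /chars_before -{1}(cat_take_drop lo (take hi Si)).
by rewrite take_takel // /nchars map_cat sumn_cat.
Qed.

Lemma chars_before_mono : {homo chars_before : lo hi / (lo <= hi)%N}.
Proof. by move=> lo hi le_lh; rewrite (chars_before_slice le_lh) leq_addr. Qed.

Lemma chars_beforeS (t : nat) : (t < size Si)%N ->
  chars_before t.+1 = (chars_before t + size (nth [::] Si t))%N.
Proof.
move=> lt_t; rewrite /chars_before (take_nth [::] lt_t) -cats1.
by rewrite /nchars map_cat sumn_cat /= addn0.
Qed.

Lemma chars_before_size : chars_before (size Si) = nchars Si.
Proof. by rewrite /chars_before take_size. Qed.

Lemma string_atP (pos : nat) : (pos < nchars Si)%N ->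
  (chars_before (string_at Si pos) <= pos < chars_before (string_at Si pos).+1)%N.
Proof.
move=> lt_pos; set P := fun t => (pos < chars_before t.+1)%N.
have n_gt0 : (0 < size Si)%N.
  by case: Si lt_pos => //=; rewrite /nchars /= ltn0.
have hasP : has P (iota 0 (size Si)).
  apply/hasP; exists (size Si).-1; first by rewrite mem_iota; lia.
  by rewrite /P prednK // chars_before_size.
rewrite /string_at -/P; set t := find P _.
have lt_t : (t < size Si)%N by rewrite -[X in (_ < X)%N](size_iota 0) -has_find.
have P_t : P t by have := nth_find 0%N hasP; rewrite nth_iota.
have before_t j : (j < t)%N -> ~~ P j.
  move=> lt_j; have := @before_find _ 0%N P _ _ lt_j.
  by rewrite nth_iota ?add0n; [move=> -> | lia].
rewrite -/(P t) P_t andbT; clearbody t.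
case: t {lt_t P_t} before_t => [_ | t /(_ t (ltnSn t))]; last by rewrite leqNgt.
by rewrite /chars_before take0.
Qed.

Lemma string_at_range (lo hi pos : nat) : (hi <= size Si)%N ->
  (chars_before lo <= pos < chars_before hi)%N -> (lo <= string_at Si pos < hi)%N.
Proof.
move=> le_hi /andP[le_lo lt_hi].
have lt_pos : (pos < nchars Si)%N.
  by rewrite -chars_before_size (leq_trans lt_hi) ?chars_before_mono.
have /andP[le_t lt_t] := string_atP lt_pos.
apply/andP; split.
  rewrite -ltnS ltnNge; apply/negP => /chars_before_mono; lia.
rewrite ltnNge; apply/negP => /chars_before_mono; lia.
Qed.

End CharsBefore.

Lemma sample_posE (N m j : nat) :
  sample_pos N m j = Num.truncn (j%:R * (N%:R / m.+1%:R) : rat).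
Proof. by rewrite /sample_pos natrM mulrA. Qed.

Lemma sample_pos_last (N m : nat) : sample_pos N m m.+1 = N.
Proof.
rewrite sample_posE mulrC divfK ?pnatr_eq0 //.
by apply: truncn_def; rewrite lexx /= ltr_nat.
Qed.

(* Take the least j >= 1 with sample_pos j >= A; it is also >= B, and the
   previous position is < A (or j = 1), so j q - q <= A. *)
Lemma sample_pos_gap (N m A B : nat) : (A <= B <= N)%N ->
  (forall j, (1 <= j <= m)%N -> ~~ (A <= sample_pos N m j < B)%N) ->
  B%:R <= A%:R + N%:R / m.+1%:R :> rat.
Proof.
move=> /andP[le_AB le_BN] no_sample.
set q := N%:R / m.+1%:R.
have q_ge0 : 0 <= q by rewrite divr_ge0.
have pos_le j : (sample_pos N m j)%:R <= j%:R * q.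
  by rewrite sample_posE truncn_le mulr_ge0.
have pos_gt j : j%:R * q < (sample_pos N m j).+1%:R.
  by rewrite sample_posE truncnS_gt.
have ex_j : exists j, (0 < j)%N && (A <= sample_pos N m j)%N.
  by exists m.+1; rewrite sample_pos_last (leq_trans le_AB).
case: (ex_minnP ex_j) => j /andP[j_gt0 A_le_j] j_min.
have le_jm : (j <= m.+1)%N by apply: j_min; rewrite sample_pos_last (leq_trans le_AB).
have B_le_j : (B <= sample_pos N m j)%N.
  case: (ltnP m j) => [lt_mj | le_jm'].
    by rewrite (_ : j = m.+1) ?sample_pos_last //; lia.
  by have := no_sample j; rewrite j_gt0 le_jm' A_le_j -leqNgt => /(_ isT).
have prev_le_A : j.-1%:R * q <= A%:R.
  case: j j_gt0 {A_le_j B_le_j le_jm} j_min => [|[|j]] // _ j_min.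
    by rewrite mul0r ler0n.
  have : ~~ (A <= sample_pos N m j.+1)%N.
    by apply/negP => le_A; have := j_min j.+1 le_A; rewrite ltnn.
  by rewrite -ltnNge => lt_A; apply: le_trans (ltW (pos_gt _)) _; rewrite ler_nat.
have : B%:R <= j%:R * q by apply: le_trans (pos_le j); rewrite ler_nat.
have -> : j%:R = j.-1%:R + 1 :> rat by rewrite natr1 prednK.
by rewrite mulrDl mul1r; lra.
Qed.

Lemma nsamples_spacing (N : nat) (w : rat) : 0 < w ->
  N%:R / (nsamples N w).+1%:R <= w.
Proof.
move=> w_gt0; case: (posnP N) => [-> | N_gt0]; first by rewrite mul0r ltW.
have Nw_gt0 : 0 < N%:R / w by rewrite divr_gt0 ?ltr0n.
have ceil_gt0 : 0 < Num.ceil (N%:R / w) by rewrite ceil_gt0.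
have -> : (nsamples N w).+1%:R = (Num.ceil (N%:R / w))%:~R :> rat.
  rewrite /nsamples prednK; last by rewrite absz_gt0 gt_eqF.
  by rewrite natr_absz gtr0_norm.
rewrite ler_pdivrMr ?ltr0z // mulrC -ler_pdivrMr //; exact: ceil_ge.
Qed.

Section SampleGaps.

Variables (Si : seq str) (w : rat).
Hypothesis w_gt0 : 0 < w.

Notation sampled := (fun t => t \in sample_idx Si w).

Lemma unsampled_chars_le (lo hi : nat) : (lo <= hi <= size Si)%N ->
  (forall t, (lo <= t < hi)%N -> ~~ sampled t) ->
  (chars_before Si hi)%:R <= (chars_before Si lo)%:R + w.
Proof.
move=> /andP[le_lh le_hn] no_sample.
set N := nchars Si; set m := nsamples N w.
have gap : (chars_before Si hi)%:R <= (chars_before Si lo)%:R + N%:R / m.+1%:R :> rat.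
  apply: sample_pos_gap.
    by rewrite !chars_before_mono // /N -chars_before_size chars_before_mono.
  move=> j hj; apply/negP => /(string_at_range le_hn) /no_sample/negP; apply.
  by apply/mapP; exists j; rewrite // mem_iota -/N -/m add1n ltnS.
by apply: le_trans gap _; rewrite lerD2l nsamples_spacing.
Qed.

Lemma chars_before_count_le (L k lo hi : nat) :
  (forall s, s \in Si -> (size s <= L)%N) -> (lo <= hi <= size Si)%N ->
  count sampled (iota lo (hi - lo)) = k ->
  (chars_before Si hi)%:R <= (chars_before Si lo)%:R + k.+1%:R * (w + L%:R).
Proof.
move=> size_le; elim: k lo => [|k IHk] lo hlh count_k.
  have no_sample t : (lo <= t < hi)%N -> ~~ sampled t.
    move: count_k => /eqP; rewrite -leqn0 leqNgt -has_count => /hasPn + le_t.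
    by apply; rewrite mem_iota; lia.
  have := unsampled_chars_le hlh no_sample; have := ler0n rat L; lra.
have [t [/andP[le_lo_t lt_t_hi] _ before_t count_after]] :=
  count_iota_first count_k.
have lt_t : (t < size Si)%N by lia.
have before_le : (chars_before Si t)%:R <= (chars_before Si lo)%:R + w.
  by apply: unsampled_chars_le before_t; lia.
have string_t_le : (chars_before Si t.+1)%:R <= (chars_before Si t)%:R + L%:R :> rat.
  by rewrite chars_beforeS // -natrD ler_nat leq_add2l size_le ?mem_nth.
have := IHk t.+1 ltac:(lia) count_after.
rewrite -[k.+2]addn1 natrD; lra.
Qed.

End SampleGaps.

Lemma omega'_gt0 (p' : nat) (S : 'I_p' -> seq str) (v : nat) (i : 'I_p') :
  (0 < nchars (S i))%N -> 0 < omega' S v.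
Proof.
move=> Ni_gt0; have p'_gt0 : (0 < p')%N by apply: leq_ltn_trans (ltn_ord i).
by rewrite /omega' divr_gt0 // ltr0n ?muln_gt0 ?p'_gt0 // (bigD1 i) //= ltn_addr.
Qed.

Theorem lemma17 (p' : nat) (S : 'I_p' -> seq str) (v : nat) (lhat : nat)
  (Hsorted : forall j : 'I_p', sorted lexle (S j))
  (Hlhat : forall (j : 'I_p') (s : str), s \in S j -> (size s <= lhat)%N)
  (i : 'I_p') (lo hi : nat) (Hlohi : (lo <= hi <= size (S i))%N) (k : nat)
  (Hk : count (fun t => t \in sample_idx (S i) (omega' S v)) (iota lo (hi - lo)) = k) :
  ((nchars (drop lo (take hi (S i))))%:R : rat)
    <= (k.+1)%:R * (omega' S v + lhat%:R).
Proof.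
have [le_lh le_hn] := andP Hlohi.
have slice := chars_before_slice (S i) le_lh.
case: (posnP (nchars (S i))) => [Ni0 | Ni_gt0].
  have : (chars_before (S i) hi <= nchars (S i))%N.
    by rewrite -chars_before_size chars_before_mono.
  rewrite Ni0 leqn0 slice addn_eq0 => /andP[_ /eqP ->].
  by rewrite mulr_ge0 ?addr_ge0 ?divr_ge0.
have := chars_before_count_le (omega'_gt0 v Ni_gt0) (Hlhat i) Hlohi Hk.
by rewrite slice natrD lerD2l.
Qed.
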